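(* Let $w:\mathbb{R}\to(0,\infty)$ be a positive weighting function (depending on fixed parameters $\bm\theta$) such that $\int_{\mathbb{R}}k_s(y;x)w(y)\,\mathrm{d}y<\infty$ for all $x\in\mathbb{R}$ and $s>0$, where $k_s(\cdot;x)$ is the Gaussian density with mean $x$ and standard deviation $s$. Let $\sigma>0$. Define $$p_1(x\mid y,s,\bm\theta)=\frac{k_s(x;y)\,w(x)}{\int_{\mathbb{R}}k_s(z;y)\,w(z)\,\mathrm{d}z},\qquad p_2(x\mid y,\sigma,\bm\theta)=\int_{\mathbb{R}}p_1(x\mid z,\sigma,\bm\theta)\,p_1(z\mid y,\sigma,\bm\theta)\,\mathrm{d}z.$$ Then for all $x_1,x_2\in\mathbb{R}$, $$p_2(x_1\mid x_2,\sigma,\bm\theta)=p_1(x_1\mid x_2,\sqrt2\,\sigma,\bm\theta)\cdot v(x_1,x_2),$$ where $$v(x_1,x_2)=\frac{\int_{\mathbb{R}}k_{\sqrt2\sigma}(y;x_2)\,w(y)\,\mathrm{d}y}{\int_{\mathbb{R}}k_{\sigma}(y;x_2)\,w(y)\,\mathrm{d}y}\int_{\mathbb{R}}k_{\sigma/\sqrt2}\Bigl(z;\tfrac12(x_1+x_2)\Bigr)\frac{w(z)}{\int_{\mathbb{R}}k_\sigma(y;z)\,w(y)\,\mathrm{d}y}\,\mathrm{d}z.$$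
   Context: $p_1$ is the one-step transition density of a one-dimensional discrete-time spatially-explicit random walk (Gaussian kernel times weighting function, renormalized), and $p_2$ is its two-step transition density. Here $x_1$ is the location at time $t$ and $x_2$ the location at time $t-2\tau$. *)

From HB Require Import structures.
From mathcomp Require Import all_boot all_order all_algebra.
From mathcomp Require Import all_classical all_reals all_analysis.
Set Implicit Arguments. Unset Strict Implicit. Unset Printing Implicit Defensive.
Import Order.TTheory GRing.Theory Num.Theory.
Import numFieldNormedType.Exports.
Local Open Scope classical_set_scope.
Local Open Scope ring_scope.

Section walk.
Context {R : realType}.
Notation mu := (@lebesgue_measure R).

(* k_s(y; x): Gaussian density at y with mean x and standard deviation s *)
Definition kern (s x y : R) : R := normal_pdf x s y.

(* normalising constant  Z_s(y) = \int k_s(z; y) w(z) dz  (finite by hypothesis) *)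
Definition normc (w : R -> R) (s y : R) : R :=
  fine (\int[mu]_(z in [set: R]) (kern s y z * w z)%:E)%E.

Definition p1 (w : R -> R) (s x y : R) : R := kern s y x * w x / normc w s y.

Definition p2 (w : R -> R) (sigma x y : R) : \bar R :=
  (\int[mu]_(z in [set: R]) (p1 w sigma x z * p1 w sigma z y)%:E)%E.

Definition vfac (w : R -> R) (sigma x1 x2 : R) : \bar R :=
  ((normc w (Num.sqrt 2 * sigma) x2 / normc w sigma x2)%:E *
   \int[mu]_(z in [set: R])
      (kern (sigma / Num.sqrt 2) (2^-1 * (x1 + x2)) z * (w z / normc w sigma z))%:E)%E.
End walk.

From HB Require Import structures.
From mathcomp Require Import all_boot all_order all_algebra.
From mathcomp Require Import all_classical all_reals all_analysis.
From mathcomp Require Import measurable_realfun ring.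
Import Order.TTheory GRing.Theory Num.Theory.
Local Open Scope classical_set_scope.
Local Open Scope ring_scope.

(** The product of the two Gaussian kernels in the integrand of [p2] factors
    as a Gaussian in [x1 - x2] with variance [2 sigma^2] times a Gaussian in
    the intermediate point [z], centred at the midpoint [(x1 + x2) / 2] with
    variance [sigma^2 / 2].  The first factor and the weights at the endpoints
    come out of the integral; what remains is exactly the integral in [v]. *)

Section gaussian.
Context {R : realType}.

Lemma normal_pdf_gt0 (m s x : R) : s != 0 -> 0 < normal_pdf m s x.
Proof.
move=> s0; rewrite normal_pdfE //.
by rewrite mulr_gt0 ?expR_gt0 ?normal_peak_gt0.
Qed.

Lemma normal_pdfM_midpoint (s x1 x2 z : R) : 0 < s ->
  normal_pdf z s x1 * normal_pdf x2 s z =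
  normal_pdf x2 (Num.sqrt 2 * s) x1 *
  normal_pdf (2^-1 * (x1 + x2)) (s / Num.sqrt 2) z.
Proof.
move=> s0.
have r2 : 0 < Num.sqrt 2 :> R by rewrite sqrtr_gt0.
have r22 : Num.sqrt 2 ^+ 2 = 2 :> R by rewrite sqr_sqrtr.
have s_neq0 : s != 0 by rewrite gt_eqF.
have s2_neq0 : Num.sqrt 2 * s != 0 by rewrite mulf_neq0 // gt_eqF.
have s3_neq0 : s / Num.sqrt 2 != 0 by rewrite mulf_neq0 // ?invr_eq0 gt_eqF.
rewrite !normal_pdfE // /normal_peak /normal_fun.
have -> : (Num.sqrt 2 * s) ^+ 2 = 2 * s ^+ 2 by rewrite exprMn r22.
have -> : (s / Num.sqrt 2) ^+ 2 = s ^+ 2 / 2 by rewrite exprMn exprVn r22.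
set a := s ^+ 2 * pi *+ 2.
have a0 : 0 < a by rewrite mulrn_wgt0 // mulr_gt0 ?exprn_gt0 ?pi_gt0.
have -> : 2 * s ^+ 2 * pi *+ 2 = 2 * a by rewrite /a; ring.
have -> : s ^+ 2 / 2 * pi *+ 2 = 2^-1 * a by rewrite /a; field.
rewrite mulrACA -expRD [RHS]mulrACA -expRD.
congr (_ * expR _).
  rewrite -!invfM -!sqrtrM ?mulr_ge0 ?invr_ge0 ?ltW //.
  by rewrite mulrACA mulfV ?pnatr_eq0 // mul1r.
by field.
Qed.

End gaussian.

Section positive_functions.
Context {R : realType}.
Notation mu := (@lebesgue_measure R).

(* On positive values, [x^-1 = expR (- ln x)], a composition of measurable maps. *)
Lemma measurable_funV_gt0 (f : R -> R) : (forall x, 0 < f x) ->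
  measurable_fun [set: R] f -> measurable_fun [set: R] (fun x => (f x)^-1).
Proof.
move=> f_gt0 mf.
have -> : (fun x => (f x)^-1) = (fun x => expR (- ln (f x))).
  by apply/funext => x; rewrite expRN lnK // posrE.
apply: measurableT_comp; first exact: measurable_expR.
by apply: measurable_funN; apply: measurableT_comp => //; exact: measurable_ln.
Qed.

(* A vanishing integral would force [f = 0] almost everywhere, but [f] vanishes nowhere. *)
Lemma fine_integral_gt0 (f : R -> R) : (forall x, 0 < f x) ->
  measurable_fun [set: R] f ->
  (\int[mu]_(x in [set: R]) (f x)%:E < +oo)%E ->
  0 < fine (\int[mu]_(x in [set: R]) (f x)%:E)%E.
Proof.
move=> f_gt0 mf fin.
have int_ge0 : (0 <= \int[mu]_(x in [set: R]) (f x)%:E)%E.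
  by apply: integral_ge0 => x _; rewrite lee_fin ltW.
apply: fine_gt0; rewrite fin andbT lt_neqAle int_ge0 andbT.
apply/eqP => int0.
have abs_int0 : (\int[mu]_(x in [set: R]) `|(f x)%:E|)%E = 0%R.
  by rewrite [RHS]int0; apply: eq_integral => x _; rewrite gee0_abs // lee_fin ltW.
have mEf := (measurable_EFinP [set: R] f).2 mf.
have [N [mN N0 sub]] := (ae_eq_integral_abs mu measurableT mEf).1 abs_int0.
have : (mu `[0%R, 1%R]%classic <= mu N)%E.
  apply: le_measure; rewrite ?inE //.
  move=> x _; apply: sub => /= fx0; have := fx0 I => /= [[]] /eqP.
  by rewrite gt_eqF.
by rewrite N0 lebesgue_measure_itv /= lte_fin ltr01 /= sube0 lee_fin ler10.
Qed.

End positive_functions.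

Section weighted_walk.
Context {R : realType} {w : R -> R}.
Notation mu := (@lebesgue_measure R).
Hypothesis w_gt0 : forall x, 0 < w x.
Hypothesis w_meas : measurable_fun [set: R] w.
Hypothesis w_int : forall x s, 0 < s ->
  (\int[mu]_(y in [set: R]) (kern s x y * w y)%:E < +oo)%E.

Lemma measurable_kern_weight (s x : R) :
  measurable_fun [set: R] (fun y => kern s x y * w y).
Proof. by apply: measurable_funM => //; exact: measurable_normal_pdf. Qed.

Lemma normc_gt0 (s x : R) : 0 < s -> 0 < normc w s x.
Proof.
move=> s_gt0; apply: fine_integral_gt0; last exact: w_int.
- by move=> y; rewrite mulr_gt0 ?normal_pdf_gt0 ?gt_eqF.
- exact: measurable_kern_weight.
Qed.

(* The joint integrand is nonnegative and measurable, so Tonelli gives the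
   measurability of its partial integral. *)
Lemma measurable_normc (s : R) : 0 < s -> measurable_fun [set: R] (normc w s).
Proof.
move=> s_gt0.
pose f (p : R * R) := (kern s p.1 p.2 * w p.2)%:E.
have kernE : (fun p : R * R => kern s p.1 p.2) =
             (fun p : R * R => normal_pdf 0 s (p.2 - p.1)).
  apply/funext => p.
  by rewrite /kern !normal_pdfE ?gt_eqF // /normal_fun subr0.
have mf : measurable_fun [set: R * R] f.
  apply/measurable_EFinP; apply: measurable_funM.
  - rewrite kernE; apply: measurableT_comp; first exact: measurable_normal_pdf.
    exact: measurable_funB measurable_snd measurable_fst.
  - exact: measurableT_comp w_meas measurable_snd.
have f_ge0 p : (0 <= f p)%E.
  by rewrite lee_fin mulr_ge0 ?normal_pdf_ge0 ?ltW.
apply: (measurableT_comp (fine_measurable measurableT)).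
exact: (measurable_fun_fubini_tonelli_F (m2 := mu) f mf f_ge0).
Qed.

Lemma p1_mul_p1 (s x1 x2 z : R) : 0 < s ->
  p1 w s x1 z * p1 w s z x2 =
  p1 w (Num.sqrt 2 * s) x1 x2 *
    (normc w (Num.sqrt 2 * s) x2 / normc w s x2) *
    (kern (s / Num.sqrt 2) (2^-1 * (x1 + x2)) z * (w z / normc w s z)).
Proof.
move=> s_gt0.
have s2_gt0 : 0 < Num.sqrt 2 * s by rewrite mulr_gt0 ?sqrtr_gt0.
have Z2_neq0 : normc w (Num.sqrt 2 * s) x2 != 0 by rewrite gt_eqF ?normc_gt0.
have Zx_neq0 : normc w s x2 != 0 by rewrite gt_eqF ?normc_gt0.
have Zz_neq0 : normc w s z != 0 by rewrite gt_eqF ?normc_gt0.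
have gaussE := normal_pdfM_midpoint _ x1 x2 z s_gt0.
rewrite /p1 /kern; move: gaussE Z2_neq0 Zx_neq0 Zz_neq0.
(* Abstracting the transcendental factors keeps [ring] and [field] fast. *)
move: (normal_pdf z s x1) (normal_pdf x2 s z) => N1 N2.
move: (normal_pdf x2 _ x1) (normal_pdf _ (s / _) z) => N3 N4.
move: (normc w _ x2) (normc w s x2) (normc w s z) => Z2 Zx Zz.
move=> gaussE Z2_neq0 Zx_neq0 Zz_neq0.
transitivity (N1 * N2 * (w x1 * w z / Zz / Zx)); first by ring.
by rewrite gaussE; field; apply/and3P.
Qed.

End weighted_walk.

Theorem proposition1 (R : realType) (w : R -> R) (sigma : R)
  (w_pos : forall x, 0 < w x)
  (w_meas : measurable_fun [set: R] w)
  (w_int : forall x s, 0 < s ->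
     (\int[@lebesgue_measure R]_(y in [set: R]) (kern s x y * w y)%:E < +oo)%E)
  (sigma_pos : 0 < sigma) :
  forall x1 x2 : R,
    p2 w sigma x1 x2 = ((p1 w (Num.sqrt 2 * sigma) x1 x2)%:E * vfac w sigma x1 x2)%E.
Proof.
move=> x1 x2.
have Z_gt0 := normc_gt0 w_pos w_meas w_int.
have s2_gt0 : 0 < Num.sqrt 2 * sigma by rewrite mulr_gt0 ?sqrtr_gt0.
pose C := p1 w (Num.sqrt 2 * sigma) x1 x2 *
  (normc w (Num.sqrt 2 * sigma) x2 / normc w sigma x2).
pose g z := kern (sigma / Num.sqrt 2) (2^-1 * (x1 + x2)) z * (w z / normc w sigma z).
have C_ge0 : 0 <= C.
  by rewrite /C /p1 !mulr_ge0 ?invr_ge0 ?normal_pdf_ge0 ?ltW ?Z_gt0.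
have g_ge0 z : (0 <= (g z)%:E)%E.
  by rewrite lee_fin /g !mulr_ge0 ?invr_ge0 ?normal_pdf_ge0 ?ltW ?Z_gt0.
have mg : measurable_fun [set: R] (fun z => (g z)%:E).
  apply/measurable_EFinP; apply: measurable_funM; first exact: measurable_normal_pdf.
  apply: measurable_funM => //; apply: measurable_funV_gt0.
  - by move=> z; exact: Z_gt0.
  - exact: measurable_normc.
rewrite /p2 /vfac.
transitivity (\int[@lebesgue_measure R]_(z in [set: R]) (C%:E * (g z)%:E))%E.
  by apply: eq_integral => z _; rewrite (p1_mul_p1 w_pos w_meas w_int) // EFinM.
by rewrite ge0_integralZl_EFin // muleA -EFinM.
Qed.
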